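(* Let $G$ be a graph that is both weakly $4$-choosable and $\{1,1,2\}$-choosable. If $L$ is an assignment of $G$ with $|L(v)|=4$ for all $v$ (colours being integers) and $\|L\|=3$, then $G$ has a proper colouring $f$ with $f(v)\in L(v)$ for all $v$.
   Context: $\|L\|=|\{L(x):x\in V(G)\}|$ is the number of distinct lists. A set $I$ of integers is symmetric if $i\in I$ implies $-i\in I$. $G$ is weakly $4$-choosable if it is $L$-colourable (has a proper colouring $f$ with $f(v)\in L(v)$) for every assignment $L$ in which each $L(v)$ is a symmetric set of $4$ integers. For a partition $\lambda=\{k_1,\dots,k_q\}$ of $k$, a $\lambda$-assignment of $G$ is an assignment $L$ with $|L(v)|=k$ for all $v$ such that $\bigcup_vL(v)$ can be partitioned into sets $C_1,\dots,C_q$ with $|L(v)\cap C_i|=k_i$ for all $v$ and $i$; $G$ is $\lambda$-choosable if it is $L$-colourable for every $\lambda$-assignment $L$. *)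

From mathcomp Require Import all_boot all_order all_algebra.
Set Implicit Arguments. Unset Strict Implicit. Unset Printing Implicit Defensive.
Import Order.TTheory GRing.Theory Num.Theory.

Definition simple_graph (V : finType) (e : rel V) : Prop :=
  symmetric e /\ irreflexive e.

(* A list assignment: each vertex gets a finite list of integer colours,
   represented as a duplicate-free sequence (the set is its support). *)
Definition assignment (V : finType) := V -> seq int.

Definition is_k_assignment (V : finType) (k : nat) (L : assignment V) : Prop :=
  forall v, uniq (L v) /\ size (L v) = k.

Definition L_colourable (V : finType) (e : rel V) (L : assignment V) : Prop :=
  exists f : V -> int, (forall v, f v \in L v) /\ (forall u v, e u v -> f u != f v).

(* ||L|| = number of distinct lists (as sets); sorting a duplicate-free
   sequence gives a canonical representative of the set. *)
Definition num_lists (V : finType) (L : assignment V) : nat :=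
  size (undup [seq sort <=%O (L v) | v <- enum V]).

Definition symmetric_set (s : seq int) : Prop :=
  forall i : int, i \in s -> (- i)%R \in s.

Definition weakly_4_choosable (V : finType) (e : rel V) : Prop :=
  forall L : assignment V,
    is_k_assignment 4 L -> (forall v, symmetric_set (L v)) -> L_colourable e L.

(* lambda-assignment for the partition lambda = (k_1,...,k_q) of k, given as
   a sequence of part sizes; the partition C_1..C_q of the union of the lists
   is encoded by a class function c (colours outside the union are irrelevant). *)
Definition lambda_assignment (V : finType) (lambda : seq nat) (L : assignment V) : Prop :=
  is_k_assignment (sumn lambda) L /\
  exists c : int -> nat,
    (forall v x, x \in L v -> c x < size lambda) /\
    forall v (i : nat), i < size lambda ->
      count (fun x => c x == i) (L v) = nth 0 lambda i.

Definition lambda_choosable (V : finType) (e : rel V) (lambda : seq nat) : Prop :=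
  forall L : assignment V, lambda_assignment lambda L -> L_colourable e L.

From mathcomp Require Import all_boot all_order all_algebra.
From mathcomp Require Import zify.
Set Implicit Arguments. Unset Strict Implicit. Unset Printing Implicit Defensive.
Import Order.TTheory GRing.Theory Num.Theory.

(* Up to the order of its entries, L takes three values A, B, C, each a set of
   four colours, and these cut the colours into seven Venn regions.  If the
   three "pairwise only" regions (A∩B)\C, (A∩C)\B, (B∩C)\A have two elements
   each and all other regions are empty, renaming the two colours of these
   regions to ±1, ±2, ±3 turns A, B, C into the symmetric sets {±1,±2},
   {±1,±3}, {±2,±3}, and weak 4-choosability applies.  Otherwise a finite check
   on the region sizes yields two transversals (sets of regions meeting each of
   A, B, C in exactly one region) that fit into the regions together; drawing
   C_1 from the regions of the first, C_2 from those of the second, and putting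
   all remaining colours into C_3 makes L a {1,1,2}-assignment. *)

(* A Venn region of three lists: [TFT] is the set of colours lying in the first
   and third list but not in the second. *)
Definition venn := (bool * bool * bool)%type.
Definition TTT : venn := (true, true, true).
Definition TTF : venn := (true, true, false).
Definition TFT : venn := (true, false, true).
Definition FTT : venn := (false, true, true).
Definition TFF : venn := (true, false, false).
Definition FTF : venn := (false, true, false).
Definition FFT : venn := (false, false, true).
Definition FFF : venn := (false, false, false).
Definition venn_all : seq venn := [:: TTT; TTF; TFT; FTT; TFF; FTF; FFT; FFF].

Lemma mem_venn_all P : P \in venn_all.
Proof. by case: P => [[[] []] []]. Qed.

Definition list_sel (k : nat) (P : venn) : bool :=
  if k == 0 then P.1.1 else if k == 1 then P.1.2 else P.2.

Lemma list_sel_FFF k : list_sel k FFF = false.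
Proof. by rewrite /list_sel; case: ifP => //; case: ifP. Qed.

(* All sets of regions meeting each of the three lists in exactly one region. *)
Definition transversals : seq (seq venn) :=
  [:: [:: TTT]; [:: TTF; FFT]; [:: TFT; FTF]; [:: FTT; TFF]; [:: TFF; FTF; FFT]].

Definition tcount (l : seq venn) (P : venn) : nat := P \in l.

Lemma transversal_sum l k : l \in transversals -> k < 3 ->
  \sum_(P <- venn_all | list_sel k P) tcount l P = 1.
Proof.
move=> hl; case: k => [|[|[|k]]] // _; move: hl; rewrite !inE;
do ![move/orP=> [/eqP-> | ]]; try move/eqP->;
by rewrite /venn_all !big_cons big_nil.
Qed.

Definition fits (s : venn -> nat) (l1 l2 : seq venn) : bool :=
  all (fun P => tcount l1 P + tcount l2 P <= s P) venn_all.

Definition triangle_config (s : venn -> nat) : bool :=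
  [&& s TTT == 0, s TTF == 2, s TFT == 2, s FTT == 2, s TFF == 0, s FTF == 0 & s FFT == 0].

Definition venn_ok (s : venn -> nat) : bool :=
  triangle_config s || has (fun l1 => has (fits s l1) transversals) transversals.

Lemma venn_ok_eq s s' : s =1 s' -> venn_ok s = venn_ok s'.
Proof.
move=> es; rewrite /venn_ok /triangle_config !es; congr (_ || _).
by apply: eq_has => l1; apply: eq_has => l2; apply: eq_all => P; rewrite es.
Qed.

Definition venn_fun (t p q r a b c : nat) (P : venn) : nat :=
  match P with
  | (true, true, true) => t | (true, true, false) => p | (true, false, true) => q
  | (false, true, true) => r | (true, false, false) => a | (false, true, false) => b
  | (false, false, true) => c | (false, false, false) => 0 end.

Lemma venn_ok_enum : all (fun t => all (fun p => all (fun q => all (fun r =>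
  (p + q + t <= 4) ==> (p + r + t <= 4) ==> (q + r + t <= 4) ==>
  venn_ok (venn_fun t p q r (4 - (p + q + t)) (4 - (p + r + t)) (4 - (q + r + t))))
  (iota 0 5)) (iota 0 5)) (iota 0 5)) (iota 0 5).
Proof. by vm_compute. Qed.

Lemma venn_ok_sizes (s : venn -> nat) : s FFF = 0 ->
  s TTT + s TTF + s TFT + s TFF = 4 ->
  s TTT + s TTF + s FTT + s FTF = 4 ->
  s TTT + s TFT + s FTT + s FFT = 4 ->
  venn_ok s.
Proof.
move=> s0 hA hB hC.
have -> : venn_ok s = venn_ok (venn_fun (s TTT) (s TTF) (s TFT) (s FTT)
    (4 - (s TTF + s TFT + s TTT)) (4 - (s TTF + s FTT + s TTT)) (4 - (s TFT + s FTT + s TTT))).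
  apply: venn_ok_eq => -[[[] []] []] /=; move: s0 hA hB hC;
  by rewrite /FFF /TTT /TTF /TFT /FTT /TFF /FTF /FFT; lia.
have := venn_ok_enum.
move/allP/(_ (s TTT)); rewrite mem_iota => /(_ ltac:(lia)).
move/allP/(_ (s TTF)); rewrite mem_iota => /(_ ltac:(lia)).
move/allP/(_ (s TFT)); rewrite mem_iota => /(_ ltac:(lia)).
move/allP/(_ (s FTT)); rewrite mem_iota => /(_ ltac:(lia)).
by move/implyP/(_ ltac:(lia))/implyP/(_ ltac:(lia))/implyP/(_ ltac:(lia)).
Qed.

Section Venn.
Variables A B C : seq int.

Definition venn_of (x : int) : venn := (x \in A, x \in B, x \in C).

Definition region (P : venn) : seq int :=
  [seq x <- undup (A ++ B ++ C) | venn_of x == P].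

Lemma region_uniq P : uniq (region P).
Proof. by rewrite filter_uniq // undup_uniq. Qed.

Lemma mem_region_venn_of x : x \in A ++ B ++ C -> x \in region (venn_of x).
Proof. by move=> hx; rewrite mem_filter eqxx mem_undup. Qed.

Lemma venn_of_region x P : x \in region P -> venn_of x = P.
Proof. by rewrite mem_filter => /andP[/eqP]. Qed.

Lemma region_FFF : region FFF = [::].
Proof.
rewrite /region (@eq_in_filter _ _ pred0) ?filter_pred0 // => x.
by rewrite mem_undup !mem_cat /venn_of; case: (x \in A); case: (x \in B); case: (x \in C).
Qed.

Lemma count_by_venn (r : pred int) (s : seq int) :
  count r s = \sum_(P <- venn_all) count (fun x => r x && (venn_of x == P)) s.
Proof.
elim: s => [|x s IH] /=; first by rewrite big1.
rewrite big_split /= -IH; congr (_ + _).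
case: (venn_of x) => [[a b] c].
by case: a; case: b; case: c; rewrite /venn_all !big_cons big_nil /=; case: (r x).
Qed.

Lemma count_by_regions (M : seq int) (sel : pred venn) (r : pred int) :
  uniq M -> (forall x, (x \in M) = sel (venn_of x)) -> {subset M <= A ++ B ++ C} ->
  count r M = \sum_(P <- venn_all | sel P) count r (region P).
Proof.
move=> uM hM sM.
have pe : perm_eq M [seq x <- undup (A ++ B ++ C) | x \in M].
  apply: uniq_perm => //; first by rewrite filter_uniq // undup_uniq.
  by move=> x; rewrite mem_filter mem_undup; case xM: (x \in M); rewrite //= sM.
rewrite (permP pe) count_filter count_by_venn [RHS]big_mkcond /=.
apply: eq_bigr => P _; rewrite /region count_filter.
case sP: (sel P); last rewrite -(count_pred0 (undup (A ++ B ++ C)));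
  apply: eq_count => x /=; rewrite hM;
  by case: eqP => [->|_]; rewrite ?sP ?andbF ?andbT.
Qed.

Lemma size_by_regions (M : seq int) (sel : pred venn) :
  uniq M -> (forall x, (x \in M) = sel (venn_of x)) -> {subset M <= A ++ B ++ C} ->
  size M = \sum_(P <- venn_all | sel P) size (region P).
Proof.
move=> uM hM sM; rewrite -count_predT (count_by_regions predT uM hM sM).
by apply: eq_bigr => P _; rewrite count_predT.
Qed.

Lemma venn_ok_regions : uniq A -> size A = 4 -> uniq B -> size B = 4 ->
  uniq C -> size C = 4 -> venn_ok (fun P => size (region P)).
Proof.
move=> uA sA uB sB uC sC.
have subA : {subset A <= A ++ B ++ C} by move=> x hx; rewrite !mem_cat hx.
have subB : {subset B <= A ++ B ++ C} by move=> x hx; rewrite !mem_cat hx orbT.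
have subC : {subset C <= A ++ B ++ C} by move=> x hx; rewrite !mem_cat hx !orbT.
have := size_by_regions (sel := fun P => P.1.1) uA (fun x => erefl) subA.
have := size_by_regions (sel := fun P => P.1.2) uB (fun x => erefl) subB.
have := size_by_regions (sel := fun P => P.2) uC (fun x => erefl) subC.
rewrite /venn_all !big_cons !big_nil /= sA sB sC => eC eB eA.
by apply: venn_ok_sizes; rewrite ?region_FFF //; lia.
Qed.

End Venn.

Definition class_of_index (k1 k2 j : nat) : nat :=
  if j < k1 then 0 else if j < k1 + k2 then 1 else 2.

Lemma count_class_of_index k1 k2 n i : k1 + k2 <= n ->
  count (fun j => class_of_index k1 k2 j == i) (iota 0 n) =
  nth 0 [:: k1; k2; n - k1 - k2] i.
Proof.
move=> le12.
have segment m d c : (forall j, m <= j < m + d -> class_of_index k1 k2 j = c) ->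
    count (fun j => class_of_index k1 k2 j == i) (iota m d) = (c == i) * d.
  move=> hc; rewrite (@eq_in_count _ _ (fun _ => c == i)).
    case: (c == i); last by rewrite count_pred0.
    by rewrite (eq_count (a2 := predT)) // count_predT size_iota mul1n.
  by move=> j; rewrite mem_iota => /hc ->.
have -> : n = k1 + (k2 + (n - k1 - k2)) by lia.
rewrite !iotaD !count_cat add0n (segment 0 k1 0) ?(segment k1 k2 1)
  ?(segment (k1 + k2) (n - k1 - k2) 2) => [|j|j|j]; rewrite /class_of_index;
  try by move=> hj; do ?case: ifP; lia.
by clear segment; case: i => [|[|[|i]]]; rewrite /= ?nth_nil; lia.
Qed.

Lemma count_index_uniq (T : eqType) (s : seq T) (h : pred nat) : uniq s ->
  count (fun x => h (index x s)) s = count h (iota 0 (size s)).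
Proof.
case: s => [//|x0 t]; move: (x0 :: t) => s us.
have es : s = map (nth x0 s) (iota 0 (size s)).
  by rewrite -/(mkseq _ _) mkseq_nth.
rewrite [in LHS]es count_map; apply: eq_in_count => i; rewrite mem_iota => /andP[_ lt].
by rewrite /preim /= -es index_uniq.
Qed.

Section SplitClasses.
Variables (A B C : seq int) (l1 l2 : seq venn).
Notation region := (region A B C).
Notation venn_of := (venn_of A B C).
Hypothesis fit : fits (fun P => size (region P)) l1 l2.

Definition split_class (x : int) : nat :=
  class_of_index (tcount l1 (venn_of x)) (tcount l2 (venn_of x))
    (index x (region (venn_of x))).

Lemma count_split_class_region P i :
  count (fun x => split_class x == i) (region P) =
  nth 0 [:: tcount l1 P; tcount l2 P; size (region P) - tcount l1 P - tcount l2 P] i.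
Proof.
rewrite (@eq_in_count _ _ (fun x =>
    class_of_index (tcount l1 P) (tcount l2 P) (index x (region P)) == i)).
  rewrite (count_index_uniq (fun j => class_of_index _ _ j == i)) ?region_uniq //.
  by rewrite count_class_of_index //; apply: (allP fit); apply: mem_venn_all.
by move=> x /venn_of_region; rewrite /split_class => ->.
Qed.

Lemma count_split_class (M : seq int) (sel : pred venn) i :
  uniq M -> (forall x, (x \in M) = sel (venn_of x)) -> {subset M <= A ++ B ++ C} ->
  size M = 4 ->
  \sum_(P <- venn_all | sel P) tcount l1 P = 1 ->
  \sum_(P <- venn_all | sel P) tcount l2 P = 1 ->
  i < 3 -> count (fun x => split_class x == i) M = nth 0 [:: 1; 1; 2] i.
Proof.
move=> uM hM sM szM h1 h2 hi.
rewrite (count_by_regions _ uM hM sM) (eq_bigr _ (fun P _ => count_split_class_region P i)).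
case: i hi => [|[|[|i]]] // _ /=.
have := size_by_regions uM hM sM; rewrite szM.
have -> : \sum_(P <- venn_all | sel P) size (region P) =
    \sum_(P <- venn_all | sel P) (size (region P) - tcount l1 P - tcount l2 P) +
    \sum_(P <- venn_all | sel P) tcount l1 P + \sum_(P <- venn_all | sel P) tcount l2 P.
  rewrite -!big_split; apply: eq_bigr => P _ /=.
  by have := allP fit P (mem_venn_all P); lia.
lia.
Qed.

End SplitClasses.

Definition pair_code (P : venn) : int :=
  if P == TTF then 1%R else if P == TFT then 2%R else 3%R.

Definition signed (j : nat) (z : int) : int := if j == 0 then z else (- z)%R.

Lemma signed_pair_code_inj (P Q : venn) (j k : nat) :
  P \in [:: TTF; TFT; FTT] -> Q \in [:: TTF; TFT; FTT] -> j < 2 -> k < 2 ->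
  signed j (pair_code P) = signed k (pair_code Q) -> P = Q /\ j = k.
Proof.
rewrite !inE => /or3P[]/eqP-> /or3P[]/eqP->;
by case: j => [|[|j]] //; case: k => [|[|k]] //= _ _ /eqP.
Qed.

Section Triangle.
Variables A B C : seq int.
Notation region := (region A B C).
Notation venn_of := (venn_of A B C).
Hypothesis tri : triangle_config (fun P => size (region P)).

(* The two colours of (A∩B)\C become 1 and -1, those of (A∩C)\B become 2 and
   -2, and those of (B∩C)\A become 3 and -3. *)
Definition triangle_colour (x : int) : int :=
  signed (index x (region (venn_of x))) (pair_code (venn_of x)).

Lemma triangle_region x : x \in A ++ B ++ C ->
  size (region (venn_of x)) = 2 /\ venn_of x \in [:: TTF; TFT; FTT].
Proof.
move=> hx; have hr := mem_region_venn_of hx.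
have : 0 < size (region (venn_of x)) by case: (region _) hr.
move: tri hx => /and4P[/eqP s0 /eqP s1 /eqP s2 /and4P[/eqP s3 /eqP s4 /eqP s5 /eqP s6]].
rewrite !mem_cat /venn_of.
by case: (x \in A); case: (x \in B); case: (x \in C); rewrite ?s0 ?s1 ?s2 ?s3 ?s4 ?s5 ?s6.
Qed.

Lemma index_region_lt2 x : x \in A ++ B ++ C -> index x (region (venn_of x)) < 2.
Proof.
by move=> hx; have [<- _] := triangle_region hx; rewrite index_mem mem_region_venn_of.
Qed.

Lemma triangle_colour_inj : {in A ++ B ++ C &, injective triangle_colour}.
Proof.
move=> x y hx hy /signed_pair_code_inj.
case/(_ (triangle_region hx).2 (triangle_region hy).2 (index_region_lt2 hx)
  (index_region_lt2 hy)) => eP ej.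
by rewrite -(nth_index 0%R (mem_region_venn_of hx)) ej eP nth_index ?mem_region_venn_of.
Qed.

Lemma triangle_colour_sym (M : seq int) (sel : pred venn) :
  (forall x, (x \in M) = sel (venn_of x)) -> {subset M <= A ++ B ++ C} ->
  symmetric_set (map triangle_colour M).
Proof.
move=> hM sM _ /mapP[x xM ->].
have hx := sM x xM; have [sz _] := triangle_region hx.
have jlt := index_region_lt2 hx.
set P := venn_of x in sz jlt *; set j := index x (region P) in jlt *.
pose y := nth 0%R (region P) (1 - j).
have yR : y \in region P by rewrite mem_nth // sz; lia.
have Py : venn_of y = P by apply: venn_of_region.
have jy : index y (region P) = 1 - j by rewrite index_uniq ?region_uniq // sz; lia.
apply/mapP; exists y; first by rewrite hM Py -hM.
rewrite /triangle_colour Py jy /signed -/P -/j.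
by case: j jlt {jy y yR Py} => [|[|]] //= _; rewrite ?opprK.
Qed.

End Triangle.

Lemma L_colourable_of_map (V : finType) (e : rel V) (L : assignment V) (g : int -> int) :
  L_colourable e (fun v => map g (L v)) -> L_colourable e L.
Proof.
case=> f [fL fe].
have pre v : exists y, (y \in L v) && (f v == g y).
  by have /mapP[y yL ->] := fL v; exists y; rewrite yL eqxx.
exists (fun v => xchoose (pre v)); split => [v|u v /fe].
  by case/andP: (xchooseP (pre v)).
case/andP: (xchooseP (pre u)) => _ /eqP gu; case/andP: (xchooseP (pre v)) => _ /eqP gv.
by apply: contra => /eqP eq_uv; rewrite gu gv eq_uv.
Qed.

Section ThreeLists.
Variables (V : finType) (e : rel V) (L : assignment V) (A B C : seq int).
Notation region := (region A B C).
Hypothesis L4 : is_k_assignment 4 L.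
Hypothesis L_sel : forall v,
  exists2 k, k < 3 & forall x, (x \in L v) = list_sel k (venn_of A B C x).

Lemma assignment_sub_union v : {subset L v <= A ++ B ++ C}.
Proof.
move=> x; have [k _ ->] := L_sel v; rewrite !mem_cat /venn_of.
by case: (x \in A) => //; case: (x \in B) => //; case: (x \in C) => //; rewrite list_sel_FFF.
Qed.

Lemma triangle_colourable : weakly_4_choosable e ->
  triangle_config (fun P => size (region P)) -> L_colourable e L.
Proof.
move=> hW tri; apply: (@L_colourable_of_map _ _ _ (triangle_colour A B C)); apply: hW.
  move=> v; have [uL sL] := L4 v; rewrite size_map map_inj_in_uniq //.
  by move=> x y /assignment_sub_union hx /assignment_sub_union hy; apply: triangle_colour_inj.
move=> v; have [k _ hk] := L_sel v.
exact: (triangle_colour_sym tri hk (@assignment_sub_union v)).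
Qed.

Lemma split_colourable l1 l2 : lambda_choosable e [:: 1; 1; 2] ->
  l1 \in transversals -> l2 \in transversals ->
  fits (fun P => size (region P)) l1 l2 -> L_colourable e L.
Proof.
move=> hL l1T l2T fit; apply: hL; split; first exact: L4.
exists (split_class A B C l1 l2); split.
  by move=> v x _; rewrite /split_class /class_of_index; do 2?case: ifP.
move=> v i hi; have [k hk hmem] := L_sel v; have [uL sL] := L4 v.
exact: (count_split_class fit uL hmem (@assignment_sub_union v) sL
  (transversal_sum l1T hk) (transversal_sum l2T hk) hi).
Qed.

Lemma three_lists_colourable :
  weakly_4_choosable e -> lambda_choosable e [:: 1; 1; 2] ->
  uniq A -> size A = 4 -> uniq B -> size B = 4 -> uniq C -> size C = 4 ->
  L_colourable e L.
Proof.
move=> hW hL uA sA uB sB uC sC.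
case/orP: (venn_ok_regions uA sA uB sB uC sC); first exact: triangle_colourable.
by case/hasP=> l1 l1T /hasP[l2 l2T]; apply: split_colourable.
Qed.

End ThreeLists.

Lemma num_lists3_representatives (V : finType) (L : assignment V) :
  num_lists L = 3 ->
  exists vA vB vC, forall v, [\/ L v =i L vA, L v =i L vB | L v =i L vC].
Proof.
rewrite /num_lists.
set S := undup _.
have inS v : sort <=%O (L v) \in S.
  by rewrite mem_undup; apply/mapP; exists v; rewrite ?mem_enum.
have ofS a : a \in S -> exists w, a = sort <=%O (L w).
  by rewrite mem_undup => /mapP[w _ ->]; exists w.
have same v w : sort <=%O (L v) = sort <=%O (L w) -> L v =i L w.
  by move=> evw x; rewrite -(mem_sort <=%O) evw mem_sort.
case: S inS ofS => [|a [|b [|c [|]]]] //= inS ofS _.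
have [vA ea] := ofS a (mem_head _ _).
have [vB eb] := ofS b ltac:(by rewrite !inE eqxx orbT).
have [vC ec] := ofS c ltac:(by rewrite !inE eqxx !orbT).
exists vA, vB, vC => v.
move: (inS v); rewrite !inE => /or3P[] /eqP ev;
  [apply: Or31 | apply: Or32 | apply: Or33]; by apply: same; rewrite ev ?ea ?eb ?ec.
Qed.

Theorem theorem9 (V : finType) (e : rel V) :
  simple_graph e ->
  weakly_4_choosable e ->
  lambda_choosable e [:: 1%N; 1%N; 2%N] ->
  forall L : assignment V,
    is_k_assignment 4 L -> num_lists L = 3%N -> L_colourable e L.
Proof.
move=> _ hW hL L L4 hn.
have [vA [vB [vC hrep]]] := num_lists3_representatives hn.
have L_sel v : exists2 k, k < 3 &
    forall x, (x \in L v) = list_sel k (venn_of (L vA) (L vB) (L vC) x).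
  by case: (hrep v) => h; [exists 0 | exists 1 | exists 2] => // x; rewrite h.
have [uA sA] := L4 vA; have [uB sB] := L4 vB; have [uC sC] := L4 vC.
exact: (three_lists_colourable L4 L_sel hW hL uA sA uB sB uC sC).
Qed.
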